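(* Let $k$ be an infinite field of characteristic $p>0$. Then for every positive integer $n$, $R_n^{(p)}\subseteq L_n$.
   Context: $X=\{x_1,x_2,\ldots\}$ is a countably infinite set and $k_0\langle X\rangle$ is the free associative $k$-algebra (without identity) on $X$. A $T$-space is a $k$-linear subspace closed under every algebra endomorphism of $k_0\langle X\rangle$; the $T$-space generated by a subset is the smallest $T$-space containing it. $S_p(v_1,\ldots,v_p)=\sum_{\sigma\in\Sigma_p}\prod_{i=1}^p v_{\sigma(i)}$. $R_1^{(p)}$ is the $T$-space generated by $S_p(x_1,\ldots,x_p)$, and $R_{n+1}^{(p)}$ is the $T$-space generated by $R_n^{(p)}$ together with all products $u\,S_p(v_1,\ldots,v_p)$, $u\in R_n^{(p)}$, $v_i\in k_0\langle X\rangle$. $L_1$ is the $T$-space generated by $x_1^p$, and $L_{n+1}$ is the $T$-space generated by $L_n$ together with all products $u\,v^p$, $u\in L_n$, $v\in k_0\langle X\rangle$. *)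

From HB Require Import structures.
From mathcomp Require Import all_boot all_order all_algebra all_fingroup.
Set Implicit Arguments. Unset Strict Implicit. Unset Printing Implicit Defensive.
Import GRing.Theory.
Local Open Scope ring_scope.

(* The free associative algebra k<X> on X = {x_0, x_1, ...} (indexed by nat),
   realised as coefficient functions on words (seq nat); k_0<X> (no identity)
   is the subset [inA] of finitely supported functions vanishing on the empty
   word. *)
Section FreeAlg.
Variable k : fieldType.

Definition ncp := seq nat -> k.

Definition inA (f : ncp) : Prop :=
  f [::] = 0 /\ exists s : seq (seq nat), forall w, f w != 0 -> w \in s.

Definition pzero : ncp := fun _ => 0.
Definition pone : ncp := fun w => (w == [::])%:R.
Definition padd (f g : ncp) : ncp := fun w => f w + g w.
Definition pscale (c : k) (f : ncp) : ncp := fun w => c * f w.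
Definition pmul (f g : ncp) : ncp :=
  fun w => \sum_(0 <= i < (size w).+1) f (take i w) * g (drop i w).
Definition pvar (i : nat) : ncp := fun w => (w == [:: i])%:R.
Definition pprod (vs : seq ncp) : ncp := foldr pmul pone vs.
Definition ppow (v : ncp) (m : nat) : ncp := pprod (nseq m v).

Definition Sp (p : nat) (v : 'I_p -> ncp) : ncp :=
  fun w => \sum_(s : 'S_p) pprod [seq v (s i) | i <- enum 'I_p] w.

Definition pset := ncp -> Prop.

Definition is_subspace (V : pset) : Prop :=
  (forall f, V f -> inA f) /\ V pzero /\
  (forall f g, V f -> V g -> V (padd f g)) /\
  (forall c f, V f -> V (pscale c f)).

Definition is_endo (phi : ncp -> ncp) : Prop :=
  (forall f, inA f -> inA (phi f)) /\
  (forall f g, inA f -> inA g -> phi (padd f g) = padd (phi f) (phi g)) /\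
  (forall c f, inA f -> phi (pscale c f) = pscale c (phi f)) /\
  (forall f g, inA f -> inA g -> phi (pmul f g) = pmul (phi f) (phi g)).

Definition is_Tspace (V : pset) : Prop :=
  is_subspace V /\ forall phi, is_endo phi -> forall f, V f -> V (phi f).

Definition Tgen (S : pset) : pset :=
  fun f => forall V, is_Tspace V -> (forall g, S g -> V g) -> V f.

Fixpoint Rsh (p : nat) (m : nat) : pset :=
  match m with
  | 0 => Tgen (fun f => f = Sp (fun i : 'I_p => pvar i))
  | m'.+1 => Tgen (fun f => Rsh p m' f \/
        exists u (v : 'I_p -> ncp), Rsh p m' u /\ (forall i, inA (v i)) /\
                                    f = pmul u (Sp v))
  end.
Definition Rp (p n : nat) : pset := Rsh p n.-1.

Fixpoint Lsh (p : nat) (m : nat) : pset :=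
  match m with
  | 0 => Tgen (fun f => f = ppow (pvar 0) p)
  | m'.+1 => Tgen (fun f => Lsh p m' f \/
        exists u v, Lsh p m' u /\ inA v /\ f = pmul u (ppow v p))
  end.
Definition Lp (p n : nat) : pset := Lsh p n.-1.

End FreeAlg.

(** Polarization: for any ring and any family [v_1, ..., v_p],
    [S_p(v_1, ..., v_p) = \sum_A (-1)^(p - |A|) (\sum_(i in A) v_i)^p],
    the sum ranging over all subsets [A] of the index set (inclusion-exclusion
    over the image of the maps [{1..p} -> {1..p}] keeps exactly the bijections).
    Each [(\sum_(i in A) x_i)^p] is the image of [x_1^p] under an endomorphism,
    and each [u (\sum_(i in A) v_i)^p] is a generator of [L_(n+1)], so every
    generator of [R_n^(p)] lies in every T-space containing the generators of
    [L_n]; induction on [n] concludes. *)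
From HB Require Import structures.
From Pilot Require Import Defs.
From mathcomp Require Import all_boot all_order all_algebra all_fingroup.
From mathcomp Require Import boolp.
Set Implicit Arguments. Unset Strict Implicit. Unset Printing Implicit Defensive.
Import GRing.Theory.
Local Open Scope ring_scope.

Lemma sum_signed_supersets (T : nzRingType) (I : finType) (B : {set I}) :
  \sum_(A : {set I} | B \subset A) (-1) ^+ (#|I| - #|A|) = (B == setT)%:R :> T.
Proof.
have [->|nBT] := eqP.
  rewrite (big_pred1 setT) => [|A]; last by rewrite subTset.
  by rewrite cardsT subnn expr0.
have [i0 i0B] : exists i0, i0 \notin B.
  have [i0 /= ?|noB] := pickP [pred x | x \notin B]; first by exists i0.
  by case: nBT; apply/setP => x; rewrite in_setT; apply/negbFE/noB.
(* Toggling [i0] pairs the supersets of [B] with opposite signs. *)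
pose toggle (A : {set I}) := if i0 \in A then A :\ i0 else i0 |: A.
have toggleK : involutive toggle.
  move=> A; rewrite /toggle; case i0A: (i0 \in A).
    by rewrite !inE eqxx /= setD1K.
  by rewrite setU11 setU1K ?i0A.
rewrite (bigID (fun A : {set I} => i0 \in A)) /= (reindex_inj (inv_inj toggleK)) /=.
rewrite [X in X + _](_ : _ = \sum_(A : {set I} | (B \subset A) && (i0 \notin A))
                               - (-1) ^+ (#|I| - #|A|)) ?sumrN ?addNr //.
rewrite -sumrN; apply: eq_big => A.
  rewrite /toggle; case: ifP => i0A /=; first by rewrite setD11 !andbF.
  rewrite setU11 !andbT; apply/idP/idP => /subsetP sBA; apply/subsetP => x xB.
    by have := sBA x xB; rewrite !inE; case: eqP xB => [->|//]; rewrite (negbTE i0B).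
  by rewrite !inE sBA ?orbT.
case/andP=> _; rewrite /toggle; case: ifP => i0A; first by rewrite setD11.
move=> _; rewrite cardsU1 i0A add1n.
have ltAI : (#|A| < #|I|)%N.
  rewrite -(cardsC A) -[X in (X < _)%N]addn0 ltn_add2l card_gt0.
  by apply/set0Pn; exists i0; rewrite inE i0A.
by rewrite -[(#|I| - #|A|)%N](subnSK ltAI) exprS mulN1r opprK.
Qed.

Lemma expr_sum_ffun_on (T : nzRingType) (I : finType) (A : {set I}) (v : I -> T) n :
  (\sum_(i in A) v i) ^+ n =
  \sum_(f : {ffun 'I_n -> I} | f \in ffun_on (mem A)) \prod_(j < n) v (f j).
Proof.
rewrite -(bigA_distr_big _ (fun (_ : 'I_n) i => v i)) /=.
by rewrite -(big_mkord xpredT (fun _ => \sum_(i in A) v i)) prodr_const_nat subn0.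
Qed.

Lemma polarization (T : nzRingType) n (v : 'I_n -> T) :
  \sum_(s : 'S_n) \prod_(i < n) v (s i) =
  \sum_(A : {set 'I_n}) (-1) ^+ (n - #|A|) * (\sum_(i in A) v i) ^+ n.
Proof.
pose P (f : {ffun 'I_n -> 'I_n}) := \prod_(j < n) v (f j).
transitivity (\sum_(f : {ffun 'I_n -> 'I_n}) (injectiveb f)%:R * P f).
  symmetry; rewrite (bigID (fun f : {ffun _ -> _} => injectiveb f)) /= addrC.
  rewrite big1 => [|f /negbTE->]; last by rewrite mul0r.
  rewrite add0r (reindex (@pval _)) /=; last first.
    by exists (insubd (1%g : 'S_n)) => f injf; [apply: val_inj|]; apply: insubdK.
  apply: eq_big => [s|s _]; first by rewrite (valP s).
  by rewrite (valP s) mul1r /P; apply: eq_bigr => i _; rewrite pvalE.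
under [RHS]eq_bigr do rewrite expr_sum_ffun_on big_distrr big_mkcond /=.
rewrite exchange_big /=; apply: eq_bigr => f _.
have imsetT_inj : (f @: [set: 'I_n] == setT) = injectiveb f.
  apply/idP/injectiveP => [/eqP imfT | injf]; last first.
    by rewrite eqEcard subsetT /= card_imset.
  have /imset_injP injf : #|f @: [set: 'I_n]| == #|[set: 'I_n]| by rewrite imfT.
  by move=> x y fxy; apply: injf; rewrite ?inE.
rewrite -imsetT_inj -(sum_signed_supersets T (f @: [set: 'I_n])) card_ord.
rewrite big_distrl /= big_mkcond /=; apply: eq_bigr => A _.
have -> : (f \in ffun_on (mem A)) = (f @: [set: 'I_n] \subset A).
  apply/ffun_onP/subsetP => [fA y /imsetP[x _ ->] | fA x]; first exact: fA.
  by apply: fA; apply/imsetP; exists x.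
by case: ifP.
Qed.

Section NcpProduct.
Variable k : fieldType.
Implicit Types f g h : ncp k.

Lemma pmul_nil f g : pmul f g [::] = f [::] * g [::].
Proof. by rewrite /pmul big_nat1. Qed.

Lemma pmul_cons f g a w :
  pmul f g (a :: w) = f [::] * g (a :: w) + pmul (fun u => f (a :: u)) g w.
Proof. by rewrite /pmul /= big_nat_recl. Qed.

Lemma pmulDl f1 f2 g : pmul (padd f1 f2) g = padd (pmul f1 g) (pmul f2 g).
Proof.
apply: funext => w; rewrite /pmul /padd -big_split /=.
by apply: eq_bigr => i _; rewrite mulrDl.
Qed.

Lemma pmulDr f g1 g2 : pmul f (padd g1 g2) = padd (pmul f g1) (pmul f g2).
Proof.
apply: funext => w; rewrite /pmul /padd -big_split /=.
by apply: eq_bigr => i _; rewrite mulrDr.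
Qed.

Lemma pmulA : associative (@pmul k).
Proof.
move=> f g h; apply: funext => w; elim: w f => [|a w IHw] f.
  by rewrite !pmul_nil mulrA.
rewrite !pmul_cons pmul_nil IHw.
have -> : (fun u => pmul f g (a :: u)) =
          padd (fun u => f [::] * g (a :: u)) (pmul (fun u => f (a :: u)) g).
  by apply: funext => u; rewrite pmul_cons.
rewrite pmulDl /padd mulrDr addrA -mulrA; congr (_ + _ + _).
by rewrite /pmul mulr_sumr; apply: eq_bigr => i _; rewrite mulrA.
Qed.

Lemma pmul1r : left_id (@pone k) (@pmul k).
Proof.
move=> f; apply: funext => w; rewrite /pmul big_nat_recl //= take0 drop0 mul1r.
case: w => [|a w]; first by rewrite big_geq ?addr0.
by rewrite big1 ?addr0 // => i _; rewrite /pone /= mul0r.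
Qed.

Lemma pmulr1 : right_id (@pone k) (@pmul k).
Proof.
move=> f; apply: funext => w.
rewrite /pmul big_nat_recr //= take_size drop_size mulr1.
rewrite big1_seq ?add0r // => i; rewrite mem_index_iota => /andP[_ ltiw].
rewrite /pone; case: eqP => [/(congr1 size)|]; rewrite ?mulr0 // size_drop /=.
by move=> /eqP; rewrite subn_eq0 leqNgt; case/andP: ltiw => _ ->.
Qed.

Definition popp f : ncp k := fun w => - f w.

Lemma paddA : associative (@padd k).
Proof. by move=> f g h; apply: funext => w; rewrite /padd addrA. Qed.

Lemma paddC : commutative (@padd k).
Proof. by move=> f g; apply: funext => w; rewrite /padd addrC. Qed.

Lemma padd0 : left_id (@pzero k) (@padd k).
Proof. by move=> f; apply: funext => w; rewrite /padd /pzero add0r. Qed.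

Lemma paddN : left_inverse (@pzero k) popp (@padd k).
Proof. by move=> f; apply: funext => w; rewrite /padd /pzero /popp addNr. Qed.

Lemma pone_neq0 : @pone k <> @pzero k.
Proof. by move/(congr1 (fun f => f [::])); rewrite /pone /pzero /=; apply/eqP/oner_neq0. Qed.

End NcpProduct.

(* [k<X>] with identity, as a ring, to reuse the big-operator theory. *)
Definition ncpRing (k : fieldType) := ncp k.
HB.instance Definition _ (k : fieldType) := gen_eqMixin (ncpRing k).
HB.instance Definition _ (k : fieldType) := gen_choiceMixin (ncpRing k).
HB.instance Definition _ (k : fieldType) :=
  GRing.isZmodule.Build (ncpRing k) (@paddA k) (@paddC k) (@padd0 k) (@paddN k).
HB.instance Definition _ (k : fieldType) :=
  GRing.Zmodule_isNzRing.Build (ncpRing k) (@pmulA k) (@pmul1r k) (@pmulr1 k)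
    (@pmulDl k) (@pmulDr k) (introN eqP (@pone_neq0 k)).

Section Substitution.
Variable k : fieldType.
Local Notation RR := (ncpRing k).
Implicit Types f g : ncp k.

Lemma ncp_sumE I (r : seq I) (P : pred I) (F : I -> RR) w :
  (\sum_(i <- r | P i) F i) w = \sum_(i <- r | P i) F i w.
Proof. exact: (big_morph (fun f : RR => f w)). Qed.

Lemma pprodE (vs : seq (ncp k)) : Defs.pprod vs = \prod_(v <- vs) (v : RR).
Proof. by elim: vs => [|v vs IHvs]; rewrite ?big_nil ?big_cons //= IHvs. Qed.

Lemma ppowE f m : ppow f m = (f : RR) ^+ m.
Proof. by elim: m => [|m IHm]; rewrite ?expr0 // exprS -IHm. Qed.

Lemma SpE p (v : 'I_p -> ncp k) : Sp v = \sum_(s : 'S_p) \prod_(i < p) (v (s i) : RR).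
Proof.
apply: funext => w; rewrite /Sp ncp_sumE; apply: eq_bigr => s _.
by rewrite pprodE big_map enumT unlock.
Qed.

(* The endomorphism [x_0 |-> \sum_(i in S) x_i], [x_j |-> 0] for [j != 0]:
   the coefficient of a word over [S] is that of [x_0 ^ |w|] in [f]. *)
Definition subst0 (S : seq nat) f : ncp k :=
  fun w => if all (mem S) w then f (nseq (size w) 0%N) else 0.

Fixpoint words (S : seq nat) (n : nat) : seq (seq nat) :=
  if n is n'.+1 then [seq a :: u | a <- S, u <- words S n'] else [:: [::]].

Lemma mem_words S w : all (mem S) w -> w \in words S (size w).
Proof.
elim: w => [|a w IHw] //= /andP[aS /IHw wS].
exact: (allpairs_f (fun a u => a :: u)).
Qed.

Lemma inA_subst0 S f : inA f -> inA (subst0 S f).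
Proof.
move=> [f0 [s fs]]; split; first by rewrite /subst0.
exists (flatten [seq words S (size u) | u <- s]) => w; rewrite /subst0.
case: ifP => [wS|_]; last by rewrite eqxx.
move/fs => ws; apply/flatten_mapP; exists (nseq (size w) 0%N) => //.
by rewrite size_nseq; apply: mem_words.
Qed.

Lemma subst0D S f g : subst0 S (padd f g) = padd (subst0 S f) (subst0 S g).
Proof. by apply: funext => w; rewrite /subst0 /padd; case: ifP; rewrite ?addr0. Qed.

Lemma subst0Z S c f : subst0 S (pscale c f) = pscale c (subst0 S f).
Proof. by apply: funext => w; rewrite /subst0 /pscale; case: ifP; rewrite ?mulr0. Qed.

Lemma subst0M S f g : subst0 S (pmul f g) = pmul (subst0 S f) (subst0 S g).
Proof.
apply: funext => w; rewrite /subst0 /pmul size_nseq.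
have all_take_drop i : all (mem S) w = all (mem S) (take i w) && all (mem S) (drop i w).
  by rewrite -all_cat cat_take_drop.
case: ifP => wS.
  apply: eq_big_nat => i /andP[_ ltiw]; move: wS; rewrite (all_take_drop i).
  by case/andP=> -> ->; rewrite size_takel // size_drop take_nseq // drop_nseq.
rewrite big1 // => i _; move: wS; rewrite (all_take_drop i).
by case: (all _ (take i w)); case: (all _ (drop i w)); rewrite ?mulr0 ?mul0r.
Qed.

Lemma subst0_ppow S f m : subst0 S (ppow f m) = ppow (subst0 S f) m.
Proof.
elim: m => [|m IHm]; last by rewrite [ppow f _]/= subst0M IHm.
by apply: funext => -[|a w] //=; rewrite /subst0 /pone /=; case: ifP.
Qed.

Lemma subst0_endo S : is_endo (subst0 S).
Proof.
split; first exact: inA_subst0.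
split; first by move=> f g _ _; apply: subst0D.
split; first by move=> c f _; apply: subst0Z.
by move=> f g _ _; apply: subst0M.
Qed.

Lemma subst0_pvar0 p (A : {set 'I_p}) :
  subst0 [seq val i | i <- enum A] (pvar k 0) = \sum_(i in A) (pvar k i : RR).
Proof.
apply: funext => w; rewrite ncp_sumE /subst0 /pvar.
case: w => [|a [|b w]] /=.
- by rewrite big1.
- rewrite andbT; have [/mapP[j] | aA] := boolP (a \in [seq val i | i <- enum A]).
    rewrite mem_enum => jA ->; rewrite (bigD1 j) //= eqxx big1 ?addr0 // => i.
    by case/andP=> _ ij; case: eqP => // -[/val_inj eij]; rewrite eij eqxx in ij.
  rewrite big1 // => i iA; case: eqP => // -[ai]; case/negP: aA.
  by apply/mapP; exists i; rewrite ?mem_enum.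
- by rewrite if_same big1 // => i _; rewrite eqseq_cons andbC.
Qed.

End Substitution.

Section TSpaces.
Variable k : fieldType.
Local Notation RR := (ncpRing k).

Lemma inA0 : inA (0 : RR).
Proof. by split => //; exists [::] => w; rewrite eqxx. Qed.

Lemma inAD (f g : RR) : inA f -> inA g -> inA (f + g).
Proof.
move=> [f0 [s fs]] [g0 [t gt]]; split.
  by rewrite -[(f + g) [::]]/(f [::] + g [::]) f0 g0 addr0.
exists (s ++ t) => w; rewrite -[(f + g) w]/(f w + g w) mem_cat.
have [/fs -> // | /negPn/eqP ->] := boolP (f w != 0).
by rewrite add0r => /gt ->; rewrite orbT.
Qed.

Lemma inA_sum I (r : seq I) (P : pred I) (F : I -> RR) :
  (forall i, P i -> inA (F i)) -> inA (\sum_(i <- r | P i) F i).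
Proof. by move=> AF; apply: big_ind => //; [exact: inA0 | exact: inAD]. Qed.

Variable V : pset k.
Hypothesis TV : is_Tspace V.

Lemma Tspace0 : V (0 : RR).
Proof. by case: TV => -[_ []]. Qed.

Lemma TspaceD (f g : RR) : V f -> V g -> V (f + g).
Proof. by case: TV => -[_ [_ [VD _]]] _; apply: VD. Qed.

Lemma TspaceMsign n (f : RR) : V f -> V ((-1) ^+ n * f).
Proof.
case: TV => -[_ [_ [_ VZ]]] _ Vf; elim: n => [|n IHn]; first by rewrite expr0 mul1r.
rewrite exprS -mulrA mulN1r.
have -> : - ((-1) ^+ n * f) = pscale (-1) ((-1) ^+ n * f).
  by apply: funext => w; rewrite /pscale mulN1r.
exact: VZ.
Qed.

Lemma Tspace_sum I (r : seq I) (P : pred I) (F : I -> RR) :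
  (forall i, P i -> V (F i)) -> V (\sum_(i <- r | P i) F i).
Proof. by move=> VF; apply: big_ind => //; [exact: Tspace0 | exact: TspaceD]. Qed.

Lemma Tspace_Sp_pvar p : V (ppow (pvar k 0) p) -> V (Sp (fun i : 'I_p => pvar k i)).
Proof.
move=> Vx0p; rewrite SpE (polarization (fun i : 'I_p => pvar k i : RR)).
apply: Tspace_sum => A _.
apply: TspaceMsign; have := TV.2 _ (subst0_endo k [seq val i | i <- enum A]) _ Vx0p.
by rewrite subst0_ppow subst0_pvar0 ppowE.
Qed.

Lemma Tspace_mul_Sp p (u : RR) (v : 'I_p -> ncp k) :
  (forall w, inA w -> V (pmul u (ppow w p))) -> (forall i, inA (v i)) ->
  V (pmul u (Sp v)).
Proof.
move=> Vuwp Av; rewrite SpE polarization -[pmul _ _]/(u * _) big_distrr /=.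
apply: Tspace_sum => A _; rewrite mulrA (commr_sign u) -mulrA.
apply: TspaceMsign; rewrite -ppowE; apply: Vuwp.
by apply: inA_sum => i _.
Qed.

End TSpaces.

Lemma Rsh_sub_Lsh (k : fieldType) p m (f : ncp k) : Rsh p m f -> Lsh p m f.
Proof.
elim: m f => [|m IHm] f /= Rf V TV genV; apply: (Rf V TV) => g.
  by move=> ->; apply: Tspace_Sp_pvar => //; apply: genV.
case=> [/IHm Lg | [u [v [/IHm Lu [Av ->]]]]]; first by apply: genV; left.
by apply: Tspace_mul_Sp => // w Aw; apply: genV; right; exists u, w.
Qed.

Local Close Scope ring_scope.

(* Only [p] enters, through polarization. *)
Theorem corollary3p1 (k : fieldType) (p : nat) :
  p \in [pchar k]%R ->
  (forall s : seq k, exists x : k, x \notin s) ->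
  forall n : nat, 0 < n -> forall f : ncp k, Rp p n f -> Lp p n f.
Proof. by move=> _ _ n _ f; apply: Rsh_sub_Lsh. Qed.
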